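(* Let $(X,\mathcal{A},p)$ be a standard Borel probability space. For a sub-$\sigma$-algebra $\mathcal{B}\subseteq\mathcal{A}$ let $\overline{\mathcal{B}}=\{A\in\mathcal{A}:\ p(A\,\triangle\,B)=0\text{ for some }B\in\mathcal{B}\}$. If $(\mathcal{B}_n)_{n\ge0}$ is a sequence of sub-$\sigma$-algebras with $\mathcal{B}_{n+1}\subseteq\mathcal{B}_n$ for all $n$, then $\bigcap_n\overline{\mathcal{B}_n}=\overline{\bigcap_n\mathcal{B}_n}$.
   Context: In the paper $\overline{\mathcal{B}}$ is written $\mathcal{I}_{e_\mathcal{B}}$, the invariant $\sigma$-algebra of the conditional expectation kernel $e_\mathcal{B}(A\mid x)=\mathbb{P}[A\mid\mathcal{B}](x)$; it equals the set of $A\in\mathcal{A}$ almost surely equal to a set in $\mathcal{B}$. *)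

From HB Require Import structures.
From mathcomp Require Import all_boot all_order all_algebra.
From mathcomp Require Import all_classical all_reals all_analysis.
Set Implicit Arguments. Unset Strict Implicit. Unset Printing Implicit Defensive.
Import Order.TTheory GRing.Theory Num.Theory.
Local Open Scope classical_set_scope.
Local Open Scope ring_scope.

(* A Polish space: a separable, completely metrizable topological space.
   We present it as a complete (pseudo)metric space which is Hausdorff
   (hence metric) and has a countable dense subset. *)
Definition standard_Borel (d : measure_display) (T : measurableType d) : Prop :=
  exists (R : realType) (Y : completePseudoMetricType R),
    hausdorff_space Y /\
    (exists D : set Y, countable D /\ closure D = [set: Y]) /\
    exists f : T -> Y, bijective f /\
      forall A : set T, measurable A <->
        exists B : set Y, <<s [set: Y], open >> B /\ A = f @^-1` B.

Definition ae_closure (d : measure_display) (T : measurableType d)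
  (R : realType) (p : probability T R) (G : set (set T)) : set (set T) :=
  [set A | measurable A /\
     exists B, G B /\ p ((A `\` B) `|` (B `\` A)) = 0%E].

From HB Require Import structures.
From mathcomp Require Import all_boot all_order all_algebra.
From mathcomp Require Import all_classical all_reals all_analysis.
Local Open Scope classical_set_scope.
Local Open Scope ring_scope.
Set Implicit Arguments. Unset Strict Implicit.

(* Pick C_n in B_n with p(A + C_n) = 0.  Off the null set \bigcup_n (A + C_n)
   every C_n agrees with A, hence so does C = lim sup C_n.  Since lim sup
   ignores finitely many terms and the B_n decrease, C lies in every B_k.
   The argument works on any probability space. *)

Lemma sigma_algebra_bigcapT (T : Type) (G : set (set T)) (F : (set T)^nat) :
  sigma_algebra [set: T] G -> (forall n, G (F n)) -> G (\bigcap_n F n).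
Proof.
move=> [_ GC GU] GF.
have -> : \bigcap_n F n = [set: T] `\` \bigcup_n ([set: T] `\` F n).
  by rewrite setTD setC_bigcup; apply: eq_bigcapr => n _; rewrite setTD setCK.
by apply: (GC); apply: (GU) => n; exact: (GC).
Qed.

Lemma lim_sup_setE (T : Type) (F : (set T)^nat) :
  lim_sup_set F = \bigcap_n \bigcup_i F (n + i)%N.
Proof. by apply: eq_bigcapr => n _; rewrite bigcup_addn. Qed.

Lemma lim_sup_set_shift (T : Type) (F : (set T)^nat) k :
  lim_sup_set F = lim_sup_set (fun n => F (k + n)%N).
Proof.
rewrite !lim_sup_setE; apply/seteqP; split=> x Fx n _.
  by have [i _ Fix] := Fx (k + n)%N I; exists i; rewrite //= addnA.
have [i _ Fix] := Fx n I; exists (k + i)%N => //.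
by move: Fix => /=; rewrite addnCA.
Qed.

Lemma lim_sup_set_in_bigcap (T : Type) (G : nat -> set (set T))
    (F : (set T)^nat) :
  (forall n, sigma_algebra [set: T] (G n)) -> (forall n, G n.+1 `<=` G n) ->
  (forall n, G n (F n)) -> (\bigcap_n G n) (lim_sup_set F).
Proof.
move=> GS Gdec GF k _.
have /nonincreasing_seqP Gle : forall n, (G n.+1 <= G n)%O.
  by move=> n; apply/subsetPset.
rewrite (lim_sup_set_shift F k) lim_sup_setE.
apply: sigma_algebra_bigcapT (GS k) _ => n.
have [_ _ GU] := GS k; apply: (GU) => i.
by move/subsetPset: (Gle k (k + (n + i))%N (leq_addr _ _)); apply; exact: GF.
Qed.

Lemma setY_lim_sup_set_sub (T : Type) (A : set T) (F : (set T)^nat) :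
  A `+` lim_sup_set F `<=` \bigcup_n (A `+` F n).
Proof.
move=> x AFx; apply: contrapT => nU.
have FA n : F n x = A x.
  apply/propext; split=> h; apply: contrapT => h'; apply: nU; exists n => //.
    by right.
  by left.
case: AFx => [[Ax nLx]|[Lx nAx]].
  by apply: nLx => n _; exists n; rewrite //= FA.
by have [n _] := Lx 0%N I; rewrite FA.
Qed.

Lemma measure_setY_lim_sup_set0 d (T : measurableType d) (R : realType)
    (mu : {measure set T -> \bar R}) (A : set T) (F : (set T)^nat) :
  measurable A -> (forall n, measurable (F n)) ->
  (forall n, mu (A `+` F n) = 0%E) -> mu (A `+` lim_sup_set F) = 0%E.
Proof.
move=> mA mF AF0.
have mY B : measurable B -> measurable (A `+` B).
  by move=> mB; apply: measurableU; exact: measurableD.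
have mL : measurable (lim_sup_set F).
  by apply: bigcapT_measurable => n; exact: bigcup_measurable.
apply: measure_negligible; first exact: mY.
apply: (@negligibleS _ _ _ _ (\bigcup_n (A `+` F n))).
  exact: setY_lim_sup_set_sub.
by apply: negligible_bigcup => n; apply/negligibleP; [exact: mY|exact: AF0].
Qed.

Lemma ae_closureS d (T : measurableType d) (R : realType) (p : probability T R)
    (G H : set (set T)) :
  G `<=` H -> ae_closure p G `<=` ae_closure p H.
Proof. by move=> GH A [mA [B [GB AB0]]]; split=> //; exists B; split; auto. Qed.

Theorem proposition4p20 (d : measure_display) (X : measurableType d)
  (R : realType) (p : probability X R) (B : nat -> set (set X)) :
  standard_Borel X ->
  (forall n, sigma_algebra [set: X] (B n) /\ B n `<=` measurable) ->
  (forall n, B n.+1 `<=` B n) ->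
  \bigcap_n ae_closure p (B n) = ae_closure p (\bigcap_n B n).
Proof.
move=> _ hB Bdec; apply/seteqP; split=> [A AB|A AB n _]; last first.
  by apply: ae_closureS AB => C /(_ n I).
have mA : measurable A := (AB 0%N I).1.
have /choice [C hC] : forall n, exists C, B n C /\ p (A `+` C) = 0%E.
  by move=> n; have [_] := AB n I.
split=> //; exists (lim_sup_set C); split.
  apply: lim_sup_set_in_bigcap => [n|//|n]; first exact: (hB n).1.
  exact: (hC n).1.
apply: measure_setY_lim_sup_set0 => // n; first exact: (hB n).2 _ (hC n).1.
exact: (hC n).2.
Qed.
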